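(* Let $A$, $\tilde R$, $D$ and $R$ be real $n\times n$ matrices. If $A$ and $D$ are diagonal and $\tilde R$ is orthogonal, then $$\mathrm{Tr}\left[A R D\tilde R\right]\le \sum_j |d_j|\Big(\sum_i a_i^2 r_{ij}^2\Big)^{1/2},$$ where $a_j$ and $d_j$ are the diagonal entries of $A$ and $D$ respectively and $r_{ij}$ is the $(i,j)$ entry of $R$. *)

From mathcomp Require Import all_boot all_order all_algebra.
From mathcomp Require Import reals.
Set Implicit Arguments. Unset Strict Implicit. Unset Printing Implicit Defensive.
Import Order.TTheory GRing.Theory Num.Theory.
Local Open Scope ring_scope.

Definition orthogonal_mx (R : realType) (n : nat) (Q : 'M[R]_n) : Prop :=
  Q *m Q^T = 1%:M.

(* For diagonal A = diag(a) and D = diag(d) the trace collapses to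
   sum_j d_j <v_j, q_j>, where v_j = (a_i r_ij)_i and q_j is the j-th row of the
   orthogonal matrix; q_j is a unit vector, so Cauchy-Schwarz bounds each
   |<v_j, q_j>| by the Euclidean norm of v_j. *)

From mathcomp Require Import all_boot all_order all_algebra.
From mathcomp Require Import reals.
From mathcomp Require Import ring.
Import Order.TTheory GRing.Theory Num.Theory.
Local Open Scope ring_scope.

Lemma lagrange_identity (R : comPzRingType) (n : nat) (x y : 'I_n -> R) :
  \sum_i \sum_j (x i * y j - x j * y i) ^+ 2 =
    ((\sum_i x i ^+ 2) * (\sum_j y j ^+ 2)
     - (\sum_i x i * y i) * (\sum_j x j * y j)) *+ 2.
Proof.
rewrite mulrnBl mulr2n {2}mulrC !big_distrlr -!big_split -sumrMnl -sumrN -big_split.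
apply: eq_bigr => i _ /=.
rewrite -sumrMnl -sumrN -!big_split; apply: eq_bigr => j _ /=; ring.
Qed.

Lemma sqr_sum_mul_le (R : realDomainType) (n : nat) (x y : 'I_n -> R) :
  (\sum_i x i * y i) ^+ 2 <= (\sum_i x i ^+ 2) * (\sum_i y i ^+ 2).
Proof.
have : 0 <= \sum_i \sum_j (x i * y j - x j * y i) ^+ 2.
  by apply: sumr_ge0 => i _; apply: sumr_ge0 => j _; exact: sqr_ge0.
by rewrite lagrange_identity pmulrn_lge0 // subr_ge0 -expr2.
Qed.

Lemma normr_sum_mul_le (R : rcfType) (n : nat) (x y : 'I_n -> R) :
  `|\sum_i x i * y i| <=
    Num.sqrt (\sum_i x i ^+ 2) * Num.sqrt (\sum_i y i ^+ 2).
Proof.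
have sqr_sum_ge0 (z : 'I_n -> R) : 0 <= \sum_i z i ^+ 2.
  by apply: sumr_ge0 => i _; exact: sqr_ge0.
rewrite -sqrtrM // -sqrtr_sqr ler_sqrt ?mulr_ge0 //.
exact: sqr_sum_mul_le.
Qed.

Lemma mxtrace_diag_mul_diag (R : comPzRingType) (n : nat) (A M D Q : 'M[R]_n) :
  is_diag_mx A -> is_diag_mx D ->
  \tr (A *m M *m D *m Q) = \sum_j D j j * \sum_i A i i * M i j * Q j i.
Proof.
case/diag_mxP => a ->; case/diag_mxP => d ->.
rewrite mul_diag_mx mul_mx_diag /mxtrace.
under eq_bigr => i _ do rewrite mxE.
rewrite exchange_big; apply: eq_bigr => j _; rewrite mulr_sumr.
by apply: eq_bigr => i _; rewrite !mxE !eqxx /=; ring.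
Qed.

Lemma orthogonal_mx_row_sqr_sum (R : realType) (n : nat) (Q : 'M[R]_n) (k : 'I_n) :
  orthogonal_mx Q -> \sum_j Q k j ^+ 2 = 1.
Proof.
move=> /(congr1 (fun M : 'M[R]_n => M k k)); rewrite !mxE eqxx mulr1n => <-.
by apply: eq_bigr => j _; rewrite mxE expr2.
Qed.

Theorem lemma3 (R : realType) (n : nat) (A Rt D Rm : 'M[R]_n) :
  is_diag_mx A -> is_diag_mx D -> orthogonal_mx Rt ->
  \tr (A *m Rm *m D *m Rt) <=
    \sum_(j < n) `|D j j| * Num.sqrt (\sum_(i < n) (A i i) ^+ 2 * (Rm i j) ^+ 2).
Proof.
move=> diagA diagD orthoRt.
rewrite mxtrace_diag_mul_diag //; apply: ler_sum => j _.
apply: le_trans (ler_norm _) _; rewrite normrM ler_wpM2l //.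
apply: le_trans (normr_sum_mul_le _ _ (fun i => A i i * Rm i j) (fun i => Rt j i)) _.
rewrite orthogonal_mx_row_sqr_sum // sqrtr1 mulr1.
by under eq_bigr do rewrite exprMn.
Qed.
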